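(* The forgetful morphism $\imath:\mathcal{Q}(r,n)\to\mathcal{A}(r,n)$ is universally injective. That is, for any field $K\supseteq\mathbb{C}$ and any $K$-point $\alpha_K$ of $\mathcal{A}(r,n)$, there is at most one $K$-point $\varrho_K$ of $\mathcal{Q}(r,n)$ with $\imath(\varrho_K)=\alpha_K$.
   Context: Fix $V_\infty=\mathbb{C}^r$ with basis $e_a$ and $A_re_a=e_{a+1}$, $e_{r+1}=0$. $\mathcal{Q}(r,n)$ is the fine moduli space of framed cyclic representations $(V,B_1,B_2,B_3,I,J)$ up to $GL(V)$. These have $\dim V=n$ and satisfy $[B_1,B_2]+IJ=0$, $JB_3=A_rJ$, $B_3I=IA_r$ and $[B_3,B_i]=0$ for $i=1,2$; moreover no proper nonzero $B_1,B_2,B_3$-invariant subspace contains $\mathrm{Im}\,I$. $\mathcal{A}(r,n)$ is the fine moduli space of stable ADHM data $(V,B_1,B_2,I,J)$ with $[B_1,B_2]+IJ=0$ and no proper $B_1,B_2$-invariant subspace containing $\mathrm{Im}\,I$. The map $\imath$ forgets $B_3$. *)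

From HB Require Import structures.
From mathcomp Require Import all_boot all_algebra.
From mathcomp Require Import Rstruct complex.
Set Implicit Arguments. Unset Strict Implicit. Unset Printing Implicit Defensive.
Import GRing.Theory.
Local Open Scope ring_scope.

Definition CC : fieldType := Rdefinitions.R[i].

Section Defs.
Variables (K : fieldType) (r n : nat).

(* Convention: V = K^n, V_oo = K^r as COLUMN vectors; a linear map
   U -> W is a matrix 'M_(dim W, dim U) acting by left multiplication. *)

(* A_r e_a = e_(a+1), e_(r+1) = 0 : column a has a 1 in row a+1. *)
Definition Ar : 'M[K]_r := \matrix_(i < r, j < r) ((i : nat) == j.+1)%:R.

(* Subspaces W of K^n are encoded by a matrix S : 'M_n through
   W = { v | v^T lies in the row space of S }.  Then
   W is B-invariant   <=> (S *m B^T <= S)%MS,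
   Im I is in W        <=> (I^T <= S)%MS,
   W proper            <=> \rank S < n,
   W nonzero           <=> 0 < \rank S. *)
Definition invariant (S : 'M[K]_n) (B : 'M[K]_n) : bool := (S *m B^T <= S)%MS.
Definition contains_imI (S : 'M[K]_n) (I : 'M[K]_(n, r)) : bool := (I^T <= S)%MS.

Record adhm_data := ADHM {
  aB1 : 'M[K]_n; aB2 : 'M[K]_n; aI : 'M[K]_(n, r); aJ : 'M[K]_(r, n) }.

Record cyclic_data := Cyc {
  cB1 : 'M[K]_n; cB2 : 'M[K]_n; cB3 : 'M[K]_n;
  cI : 'M[K]_(n, r); cJ : 'M[K]_(r, n) }.

Definition stable_adhm (a : adhm_data) : Prop :=
  aB1 a *m aB2 a - aB2 a *m aB1 a + aI a *m aJ a = 0 /\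
  forall S : 'M[K]_n,
    invariant S (aB1 a) -> invariant S (aB2 a) -> contains_imI S (aI a) ->
    ~ (\rank S < n)%N.

Definition cyclic_rep (c : cyclic_data) : Prop :=
  [/\ cB1 c *m cB2 c - cB2 c *m cB1 c + cI c *m cJ c = 0,
      cJ c *m cB3 c = Ar *m cJ c,
      cB3 c *m cI c = cI c *m Ar,
      cB3 c *m cB1 c = cB1 c *m cB3 c /\ cB3 c *m cB2 c = cB2 c *m cB3 c &
      (forall S : 'M[K]_n,
        invariant S (cB1 c) -> invariant S (cB2 c) -> invariant S (cB3 c) ->
        contains_imI S (cI c) ->
        ~ ((0 < \rank S)%N /\ (\rank S < n)%N))].

Definition forget (c : cyclic_data) : adhm_data :=
  ADHM (cB1 c) (cB2 c) (cI c) (cJ c).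

(* Isomorphism under GL(V) = GL_n(K): g.(B,I,J) = (g B g^-1, g I, J g^-1). *)
Definition adhm_iso (a a' : adhm_data) : Prop :=
  exists2 g : 'M[K]_n, g \in unitmx &
    [/\ g *m aB1 a = aB1 a' *m g, g *m aB2 a = aB2 a' *m g,
        g *m aI a = aI a' & aJ a = aJ a' *m g].

Definition cyclic_iso (c c' : cyclic_data) : Prop :=
  exists2 g : 'M[K]_n, g \in unitmx &
    [/\ g *m cB1 c = cB1 c' *m g, g *m cB2 c = cB2 c' *m g,
        g *m cB3 c = cB3 c' *m g,
        g *m cI c = cI c' & cJ c = cJ c' *m g].

End Defs.

From Pilot Require Import Defs.
From HB Require Import structures.
From mathcomp Require Import all_boot all_algebra.
From mathcomp Require Import Rstruct complex.
Set Implicit Arguments. Unset Strict Implicit. Unset Printing Implicit Defensive.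
Import GRing.Theory.
Local Open Scope ring_scope.

(* Transporting B3 and B3' along isomorphisms onto alpha gives two endomorphisms
   T, T' of V that commute with B1, B2 and satisfy T I = I A_r.  Their difference
   D commutes with B1, B2 and kills Im I, so ker D is a B1,B2-invariant subspace
   containing Im I; stability of alpha forces ker D = V, i.e. T = T', and then
   rho and rho' are both isomorphic to (alpha, T). *)

Section Intertwiners.
Variables (K : fieldType) (n : nat).
Implicit Types (g h X Y Z W : 'M[K]_n).

Lemma intertwine_inv g X Y :
  g \in unitmx -> g *m X = Y *m g -> invmx g *m Y = X *m invmx g.
Proof. by move=> u gXY; rewrite -[Y](mulmxK u) -gXY !mulmxA mulVmx ?mul1mx. Qed.

Lemma intertwine_mul g h X Y Z :
  g *m X = Y *m g -> h *m Y = Z *m h -> (h *m g) *m X = Z *m (h *m g).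
Proof. by move=> gXY hYZ; rewrite -mulmxA gXY mulmxA hYZ mulmxA. Qed.

Lemma intertwine_commute g X Y Z W : g \in unitmx ->
  g *m X = Y *m g -> g *m Z = W *m g -> X *m Z = Z *m X -> Y *m W = W *m Y.
Proof.
move=> u gXY gZW XZ; apply: (can_inj (mulmxK u)).
by rewrite -!mulmxA -gZW -gXY !mulmxA -gXY -(mulmxA g) XZ mulmxA gZW.
Qed.

Lemma intertwine_framing m g X Y (P Q : 'M[K]_(n, m)) A :
  g *m X = Y *m g -> g *m P = Q -> X *m P = P *m A -> Y *m Q = Q *m A.
Proof. by move=> gXY <- XPA; rewrite mulmxA -gXY -mulmxA XPA mulmxA. Qed.

End Intertwiners.

Section CyclicIso.
Variables (K : fieldType) (r n : nat).
Implicit Types (c : cyclic_data K r n) (a : adhm_data K r n).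

Lemma cyclic_iso_sym c c' : cyclic_iso c c' -> cyclic_iso c' c.
Proof.
case=> g u [g1 g2 g3 gI gJ]; exists (invmx g); first by rewrite unitmx_inv.
split; try exact: intertwine_inv.
- by rewrite -gI mulKmx.
- by rewrite gJ mulmxK.
Qed.

Lemma cyclic_iso_trans c c' c'' :
  cyclic_iso c c' -> cyclic_iso c' c'' -> cyclic_iso c c''.
Proof.
case=> g u [g1 g2 g3 gI gJ] [h v [h1 h2 h3 hI hJ]].
exists (h *m g); first by rewrite unitmx_mul u v.
split.
- exact: intertwine_mul g1 h1.
- exact: intertwine_mul g2 h2.
- exact: intertwine_mul g3 h3.
- by rewrite -mulmxA gI hI.
- by rewrite gJ hJ mulmxA.
Qed.

Definition framed_endo a (A : 'M[K]_r) (T : 'M[K]_n) : Prop :=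
  [/\ T *m aB1 a = aB1 a *m T, T *m aB2 a = aB2 a *m T & T *m aI a = aI a *m A].

Lemma cyclic_iso_adhm c a : cyclic_rep c -> adhm_iso (forget c) a ->
  exists2 T, framed_endo a (Ar K r) T &
    cyclic_iso c (Cyc (aB1 a) (aB2 a) T (aI a) (aJ a)).
Proof.
case=> _ _ c3I [c31 c32] _ [g u [g1 g2 gI gJ]] /=.
have g3 : g *m cB3 c = (g *m cB3 c *m invmx g) *m g by rewrite mulmxKV.
exists (g *m cB3 c *m invmx g); last by exists g.
split.
- by apply: intertwine_commute u g3 g1 _; rewrite c31.
- by apply: intertwine_commute u g3 g2 _; rewrite c32.
- exact: intertwine_framing g3 gI c3I.
Qed.

Lemma invariant_kermx_tr (D B : 'M[K]_n) :
  D *m B = B *m D -> Defs.invariant (kermx D^T) B.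
Proof.
move=> DB; rewrite /Defs.invariant sub_kermx -mulmxA -trmx_mul DB trmx_mul.
by rewrite mulmxA mulmx_ker mul0mx.
Qed.

Lemma stable_adhm_commutant_eq0 a (D : 'M[K]_n) : stable_adhm a ->
  D *m aB1 a = aB1 a *m D -> D *m aB2 a = aB2 a *m D -> D *m aI a = 0 -> D = 0.
Proof.
case=> _ stable D1 D2 DI.
have imI_ker : contains_imI (kermx D^T) (aI a).
  by rewrite /contains_imI sub_kermx -trmx_mul DI trmx0.
have := stable _ (invariant_kermx_tr D1) (invariant_kermx_tr D2) imI_ker.
move/negP; rewrite -leqNgt => rank_ker.
have : (1%:M <= kermx D^T)%MS.
  by rewrite sub1mx /row_full eqn_leq rank_leq_col rank_ker.
by rewrite sub_kermx mul1mx trmx_eq0 => /eqP.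
Qed.

Lemma framed_endo_unique a A T T' : stable_adhm a ->
  framed_endo a A T -> framed_endo a A T' -> T = T'.
Proof.
move=> stable [T1 T2 TI] [T1' T2' TI'].
apply/subr0_eq/(stable_adhm_commutant_eq0 stable).
- by rewrite mulmxBl mulmxBr T1 T1'.
- by rewrite mulmxBl mulmxBr T2 T2'.
- by rewrite mulmxBl TI TI' subrr.
Qed.

End CyclicIso.

Theorem lemma3p5 (K : fieldType) (emb : {rmorphism CC -> K}) (r n : nat)
  (alpha : adhm_data K r n) (rho rho' : cyclic_data K r n) :
  stable_adhm alpha ->
  cyclic_rep rho -> cyclic_rep rho' ->
  adhm_iso (forget rho) alpha -> adhm_iso (forget rho') alpha ->
  cyclic_iso rho rho'.
Proof.
move=> stable rep rep' iso iso'.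
have [T endoT isoT] := cyclic_iso_adhm rep iso.
have [T' endoT' isoT'] := cyclic_iso_adhm rep' iso'.
rewrite (framed_endo_unique stable endoT endoT') in isoT.
exact: cyclic_iso_trans isoT (cyclic_iso_sym isoT').
Qed.
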